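(* Let $a\in\mathbb{R}^n$. The maximal number of pairwise incomparable (with respect to inclusion) half-spaces of $\mathbb{R}_{\max}^n$ with apex $-a$ is $\binom{n}{\lfloor n/2\rfloor}$.
   Context: $\mathbb{R}_{\max}=\mathbb{R}\cup\{-\infty\}$ with $a\oplus b=\max(a,b)$, $ab=a+b$. A half-space with apex $-a$ (where $a\in\mathbb{R}^n$) is a set of the form $\{x\in\mathbb{R}_{\max}^n:\bigoplus_{i\in I}a_ix_i\le\bigoplus_{j\in J}a_jx_j\}$ where $I,J$ are disjoint sets with $I\cup J=\{1,\dots,n\}$. *)

From HB Require Import structures.
From mathcomp Require Import all_boot all_order all_algebra.
From mathcomp Require Import reals.
Set Implicit Arguments. Unset Strict Implicit. Unset Printing Implicit Defensive.
Import Order.TTheory GRing.Theory Num.Theory.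
Local Open Scope ring_scope.

(* The max-plus semiring R_max = R ∪ {-oo}: None stands for -oo. *)
Definition Rmax (R : realType) := option R.

Definition tadd (R : realType) (x y : Rmax R) : Rmax R :=
  match x, y with
  | None, _ => y
  | _, None => x
  | Some u, Some v => Some (Num.max u v)
  end.

Definition tmul (R : realType) (x y : Rmax R) : Rmax R :=
  match x, y with
  | Some u, Some v => Some (u + v)
  | _, _ => None
  end.

Definition tle (R : realType) (x y : Rmax R) : bool :=
  match x, y with
  | None, _ => true
  | Some _, None => false
  | Some u, Some v => u <= v
  end.

Definition tsum (R : realType) (n : nat) (a : 'I_n -> R) (I : {set 'I_n})
  (x : 'I_n -> Rmax R) : Rmax R :=
  \big[@tadd R/None]_(i in I) tmul (Some (a i)) (x i).

(* The half-space with apex -a associated to the partition (I, J) of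
   {1..n}, J being the complement of I:
   { x in R_max^n : ⊕_{i in I} a_i x_i <= ⊕_{j in J} a_j x_j }. *)
Definition halfspace (R : realType) (n : nat) (a : 'I_n -> R) (I : {set 'I_n})
  : (('I_n -> Rmax R) -> Prop) :=
  fun x => tle (tsum a I x) (tsum a (~: I) x).

Definition subset_of (R : realType) (n : nat) (A B : ('I_n -> Rmax R) -> Prop) :=
  forall x, A x -> B x.

From HB Require Import structures.
From mathcomp Require Import all_boot all_order all_algebra.
From mathcomp Require Import reals.
From mathcomp Require Import zify.
Set Implicit Arguments. Unset Strict Implicit. Unset Printing Implicit Defensive.
Import Order.TTheory GRing.Theory Num.Theory.

(* The half-space of the partition (I, ~: I) is contained in that of (K, ~: K)
   exactly when K \subset I: one inclusion is monotonicity of tropical sums, and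
   if k \in K :\: I the point equal to 0 at k and to -oo elsewhere separates
   them.  Families of pairwise incomparable half-spaces are therefore the
   antichains of the Boolean lattice of subsets of 'I_n, and the bound is
   Sperner's theorem, proved here through the LYM inequality; the middle
   layer of subsets attains it. *)

Lemma lym_inequality (T : finType) (S : {set T}) (F : {set {set T}}) :
  {in F, forall A : {set T}, A \subset S} ->
  {in F &, forall A B : {set T}, A \subset B -> A = B} ->
  \sum_(A in F) #|A|`! * (#|S| - #|A|)`! <= #|S|`!.
Proof.
have [N leN] := ubnP #|S|; elim: N S F leN => // N IH S F leN sub anti.
have [SF | notSF] := boolP (S \in F).
  have -> : F = [set S].
    apply/setP => A; rewrite in_set1; apply/idP/eqP => [AF|->//].
    exact: anti AF SF (sub _ AF).
  by rewrite big_set1 subnn fact0 muln1.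
pose h (A : {set T}) := #|A|`! * (#|S|.-1 - #|A|)`!.
(* Count the maximal chains of subsets of S through A by the element of S
   that follows A on the chain. *)
have chains_through A : A \in F ->
    #|A|`! * (#|S| - #|A|)`! = \sum_(x in S) (if x \notin A then h A else 0).
  move=> AF; rewrite -big_mkcondr.
  rewrite (eq_bigl (mem (S :\: A))); last by move=> x; rewrite !inE andbC.
  rewrite sum_nat_const cardsD (setIidPr (sub _ AF)).
  have AS : A \proper S.
    by rewrite properEneq (sub _ AF) andbT; apply: contraNneq notSF => <-.
  have := proper_card AS => ltAS.
  have -> : #|S| - #|A| = (#|S|.-1 - #|A|).+1 by lia.
  rewrite factS /h; set m := (_ - _)%N; lia.
rewrite (eq_bigr _ chains_through) exchange_big /=.
apply: (@leq_trans (\sum_(x in S) #|S|.-1`!)); last first.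
  by rewrite sum_nat_const; case: #|S| => // m; rewrite factS.
apply: leq_sum => x xS; rewrite -big_mkcondr.
have cardSx : #|S :\ x| = #|S|.-1 by rewrite (cardsD1 x S) xS.
rewrite (eq_bigl (mem [set A in F | x \notin A])); last by move=> A; rewrite !inE.
rewrite /h -cardSx; apply: IH.
- by move: leN; rewrite (cardsD1 x S) xS; lia.
- by move=> A; rewrite inE subsetD1 => /andP[/sub -> ->].
- by move=> A B; rewrite !inE => /andP[AF _] /andP[BF _]; exact: anti.
Qed.

Lemma fact_half_mul_min n m :
  m <= n -> n./2`! * (n - n./2)`! <= m`! * (n - m)`!.
Proof.
have fact_mul_decr k : k < n./2 -> k.+1`! * (n - k.+1)`! <= k`! * (n - k)`!.
  move=> lt_k_half; have -> : n - k = (n - k.+1).+1 by lia.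
  rewrite !factS -mulnA [X in _ <= X]mulnCA.
  by apply: leq_mul (leqnn _); lia.
have below_half k : k <= n./2 -> n./2`! * (n - n./2)`! <= k`! * (n - k)`!.
  move=> le_k_half; have [d] := ubnP (n./2 - k).
  elim: d k le_k_half => // d IHd k le_k_half lt_d.
  have [<-|lt_k] := eqVneq k n./2; first exact: leqnn.
  apply: leq_trans (IHd k.+1 _ _) (fact_mul_decr k _); lia.
move=> le_mn; have [le_m_half|lt_half_m] := leqP m n./2; first exact: below_half.
have := below_half (n - m) ltac:(lia); have -> : n - (n - m) = m by lia.
by rewrite [(n - m)`! * _]mulnC.
Qed.

Lemma sperner (T : finType) (F : {set {set T}}) :
  {in F &, forall A B : {set T}, A \subset B -> A = B} -> #|F| <= 'C(#|T|, #|T|./2).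
Proof.
move=> anti; have := @lym_inequality _ [set: T] F (fun A _ => subsetT A) anti.
rewrite cardsT => lym.
have le_half : #|T|./2 <= #|T| by lia.
have fact_pos : 0 < #|T|./2`! * (#|T| - #|T|./2)`! by rewrite muln_gt0 !fact_gt0.
rewrite -(leq_pmul2r fact_pos) (bin_fact le_half).
rewrite -sum_nat_const; apply: leq_trans lym; apply: leq_sum => A _.
exact/fact_half_mul_min/max_card.
Qed.

Section HalfSpaces.
Variable R : realType.

Lemma taddA : associative (@tadd R).
Proof. by case=> [x|] [y|] [z|] //=; rewrite maxA. Qed.
Lemma taddC : commutative (@tadd R).
Proof. by case=> [x|] [y|] //=; rewrite maxC. Qed.
Lemma tadd0 : left_id None (@tadd R).
Proof. by case. Qed.

HB.instance Definition _ :=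
  Monoid.isComLaw.Build (Rmax R) None (@tadd R) taddA taddC tadd0.

Lemma tle_trans (x y z : Rmax R) : tle x y -> tle y z -> tle x z.
Proof. by case: x => [x|]; case: y => [y|]; case: z => [z|] //=; apply: le_trans. Qed.

Lemma tle_taddr (x y : Rmax R) : tle x (tadd x y).
Proof. by case: x => [x|]; case: y => [y|] //=; rewrite le_max lexx. Qed.

Variables (n : nat) (a : 'I_n -> R).

Lemma tsumS (K I : {set 'I_n}) x : K \subset I -> tle (tsum a K x) (tsum a I x).
Proof.
move=> KI; rewrite /tsum [X in tle _ X](bigID (mem K)) /=.
rewrite [X in tle _ (tadd X _)](eq_bigl (mem K)); first exact: tle_taddr.
by move=> i /=; apply/andP/idP => [[]//|iK]; split=> //; exact: (subsetP KI).
Qed.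

Lemma tsum_None (I : {set 'I_n}) x :
  {in I, forall i, x i = None} -> tsum a I x = None.
Proof. by move=> xI; rewrite /tsum big1 // => i /xI ->. Qed.

Lemma tsum_neq_None (I : {set 'I_n}) x k :
  k \in I -> x k <> None -> tsum a I x <> None.
Proof.
move=> kI; rewrite /tsum (bigD1 k) //=; case: (x k) => // u _.
by case: (\big[_/_]_(_ | _) _).
Qed.

Lemma halfspace_subsetP (I K : {set 'I_n}) :
  subset_of (halfspace a I) (halfspace a K) <-> K \subset I.
Proof.
split=> [IK | KI x]; last first.
  rewrite /halfspace => HIx; apply: tle_trans (tsumS x KI) _.
  by apply: tle_trans HIx _; apply: tsumS; rewrite setCS.
apply/subsetP => k kK; apply/negPn/negP => kI.
pose x i : Rmax R := if i == k then Some 0%R else None.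
have HIx : halfspace a I x.
  rewrite /halfspace tsum_None // => i iI; rewrite /x.
  by case: eqP => // ik; move: iI; rewrite ik (negbTE kI).
have := IK x HIx; rewrite /halfspace (tsum_None (I := ~: K)); last first.
  by move=> i; rewrite inE /x; case: eqP => // ->; rewrite kK.
have := tsum_neq_None (x := x) kK; rewrite /x eqxx => /(_ ltac:(by [])).
by case: (tsum a K _).
Qed.

End HalfSpaces.

Theorem lemma4p7 (R : realType) (n : nat) (a : 'I_n -> R) :
  (forall (k : nat) (Is : 'I_k -> {set 'I_n}),
      (forall i j : 'I_k, i != j ->
         ~ subset_of (halfspace a (Is i)) (halfspace a (Is j))) ->
      (k <= 'C(n, n./2))%N)
  /\
  (exists Is : 'I_('C(n, n./2)) -> {set 'I_n},
      forall i j : 'I_('C(n, n./2)), i != j ->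
        ~ subset_of (halfspace a (Is i)) (halfspace a (Is j))).
Proof.
split=> [k Is incomp | ].
  have subset_eq i j : Is j \subset Is i -> i = j.
    by move=> ji; apply/eqP/negPn/negP => /incomp; apply; apply/halfspace_subsetP.
  have Is_inj : injective Is by move=> i j ij; apply: subset_eq; rewrite ij.
  have := @sperner _ (Is @: setT).
  rewrite card_imset // cardsT !card_ord; apply.
  by move=> _ _ /imsetP[i _ ->] /imsetP[j _ ->] /subset_eq ->.
pose mid := [set A : {set 'I_n} | #|A| == n./2].
have card_mid : #|mid| = 'C(n, n./2) by rewrite card_draws card_ord.
pose Is i := enum_val (cast_ord (esym card_mid) i).
exists Is => i j ij /halfspace_subsetP ji; move: ij.
have /[!inE] /eqP cardi := enum_valP (cast_ord (esym card_mid) i).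
have /[!inE] /eqP cardj := enum_valP (cast_ord (esym card_mid) j).
have /enum_val_inj/cast_ord_inj -> : Is j = Is i.
  by apply/eqP; rewrite eqEcard ji /Is cardi cardj /=.
by rewrite eqxx.
Qed.
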